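(* Let $G$ be a graph with maximum degree $\Delta$. Then $\chi_{ei}(G)\le \Delta(\Delta-1)^2+1$. This bound is attained (with equality) by every odd cycle $C_n$ with $n\ge 5$.
   Context: All graphs are finite and simple. A path $P_4$ in $G$ is a sequence $uxyv$ of four distinct vertices with $ux,xy,yv\in E(G)$; $u,v$ are its end vertices. An $e$-injective $k$-coloring of $G$ is a function $f:V(G)\to\{1,\dots,k\}$ with $f(u)\ne f(v)$ whenever $u,v$ are the end vertices of some path $P_4$ in $G$; $\chi_{ei}(G)$ is the least such $k$. $C_n$ is the cycle on $n$ vertices. *)

From mathcomp Require Import all_boot.
Set Implicit Arguments. Unset Strict Implicit. Unset Printing Implicit Defensive.

(* A finite simple graph: vertex type T : finType, adjacency e : rel T,
   assumed symmetric and irreflexive (hypotheses in the theorem). *)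

Definition deg (T : finType) (e : rel T) (x : T) : nat := #|[set y | e x y]|.

(* maximum degree Delta(G) (0 for the empty graph) *)
Definition maxdeg (T : finType) (e : rel T) : nat := \max_(x : T) deg e x.

Definition isP4 (T : finType) (e : rel T) (u x y v : T) : bool :=
  [&& uniq [:: u; x; y; v], e u x, e x y & e y v].

(* there is an e-injective k-coloring f : T -> 'I_k (colors {0..k-1},
   a relabelling of {1..k}) *)
Definition ei_colorable (T : finType) (e : rel T) (k : nat) : bool :=
  [exists f : {ffun T -> 'I_k}, forall u, forall x, forall y, forall v,
      isP4 e u x y v ==> (f u != f v)].

Lemma ei_colorable_card (T : finType) (e : rel T) : ei_colorable e #|T|.
Proof.
apply/existsP; exists [ffun x => enum_rank x].
apply/forallP=> u; apply/forallP=> x; apply/forallP=> y; apply/forallP=> v.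
apply/implyP=> /andP[Hu _]; rewrite !ffunE.
move: Hu => /= /andP[Hu _]; rewrite !inE !negb_or in Hu.
case/and3P: Hu => _ _ Huv.
by apply: contra Huv => /eqP /enum_rank_inj ->.
Qed.

Lemma ei_colorable_ex (T : finType) (e : rel T) : exists k, ei_colorable e k.
Proof. by exists #|T|; exact: ei_colorable_card. Qed.

Definition chi_ei (T : finType) (e : rel T) : nat := ex_minn (ei_colorable_ex e).

Definition cycle_rel (n : nat) : rel 'I_n :=
  fun i j => (j == (i.+1 %% n) :> nat) || (i == (j.+1 %% n) :> nat).
Arguments cycle_rel : clear implicits.

(* The ends of the paths P4 form a conflict graph, whose proper colourings are
   exactly the e-injective colourings. From a vertex u there are at most Delta
   choices for x, then Delta - 1 for y <> u, then Delta - 1 for v <> x, so the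
   conflict graph has maximum degree at most Delta (Delta - 1)^2 and a greedy
   colouring uses at most Delta (Delta - 1)^2 + 1 colours.
   In an odd cycle C_n with n >= 5 we have Delta = 2, and the vertices 3j and
   3j + 3 are the ends of a P4. With two colours, the colour of vertex 3j would
   therefore alternate with j; since 3n = 0 mod n and n is odd, this is
   impossible, so three colours are needed and the bound 2 * 1^2 + 1 is attained. *)
From mathcomp Require Import all_boot zify.
Set Implicit Arguments. Unset Strict Implicit. Unset Printing Implicit Defensive.

Lemma leq_card_bigcup (I T : finType) (A : {set I}) (F : I -> {set T}) :
  #|\bigcup_(i in A) F i| <= \sum_(i in A) #|F i|.
Proof.
elim/big_rec2: _ => [|i U s _ le_Us]; first by rewrite cards0.
exact: leq_trans (leq_card_setU _ _) (leq_add _ le_Us).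
Qed.

Lemma greedy_coloring (T : finType) (c : rel T) (D : nat) :
    symmetric c -> irreflexive c -> (forall u, deg c u <= D) ->
  exists f : T -> 'I_D.+1, forall u v, c u v -> f u != f v.
Proof.
move=> c_sym c_irr deg_c.
suff /(_ (enum T)) [f f_ok] : forall s : seq T, exists f : T -> 'I_D.+1,
    forall u v, u \in s -> v \in s -> c u v -> f u != f v.
  by exists f => u v; apply: f_ok; rewrite mem_enum.
elim=> [|x s [f f_ok]]; first by exists (fun=> ord0).
pose used := f @: [set v | (v \in s) && c x v].
have /card_gt0P [col] : 0 < #|~: used|.
  rewrite -(ltn_add2l #|used|) cardsC card_ord addn0 ltnS.
  apply: leq_trans (leq_imset_card _ _) (leq_trans _ (deg_c x)).
  by apply/subset_leq_card/subsetP => v; rewrite !inE => /andP[].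
rewrite inE => col_unused.
have col_fresh v : v \in s -> c x v -> col != f v.
  by move=> vs cxv; apply: contra col_unused => /eqP ->; rewrite imset_f ?inE ?vs.
exists (fun v => if v == x then col else f v) => u v.
rewrite !inE; case: eqVneq => [-> _|ux /= us]; case: eqVneq => [-> _|vx /= vs].
- by rewrite c_irr.
- exact: col_fresh.
- by rewrite c_sym eq_sym; apply: col_fresh.
- exact: f_ok.
Qed.

Section Conflicts.
Variables (T : finType) (e : rel T).

Definition p4_ends : rel T := fun u v => [exists x, exists y, isP4 e u x y v].

Lemma ei_colorableP k :
  reflect (exists f : T -> 'I_k, forall u v, p4_ends u v -> f u != f v)
          (ei_colorable e k).
Proof.
apply: (iffP existsP) => [[f /forallP f_ok]|[f f_ok]].
  exists f => u v /existsP[x /existsP[y P4]].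
  by have /forallP/(_ x)/forallP/(_ y)/forallP/(_ v)/implyP := f_ok u; apply.
exists [ffun x => f x]; apply/forallP=> u; apply/forallP=> x; apply/forallP=> y.
apply/forallP=> v; apply/implyP => P4; rewrite !ffunE; apply: f_ok.
by apply/existsP; exists x; apply/existsP; exists y.
Qed.

Lemma chi_ei_min k : ei_colorable e k -> chi_ei e <= k.
Proof. by rewrite /chi_ei; case: ex_minnP => m _; apply. Qed.

Lemma chi_ei_colorable : ei_colorable e (chi_ei e).
Proof. by rewrite /chi_ei; case: ex_minnP. Qed.

Lemma isP4_ends u x y v : isP4 e u x y v -> p4_ends u v.
Proof. by move=> P4; apply/existsP; exists x; apply/existsP; exists y. Qed.

Lemma p4_ends_irr : irreflexive p4_ends.
Proof.
move=> u; apply/negbTE/existsP => -[x /existsP[y /and4P[]]].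
by rewrite /= !inE eqxx !orbT.
Qed.

Lemma deg_leq_maxdeg z : deg e z <= maxdeg e.
Proof. exact: (@leq_bigmax _ (deg e)). Qed.

Hypothesis e_sym : symmetric e.

Lemma p4_ends_sym : symmetric p4_ends.
Proof.
suff p4_ends_rev u v : p4_ends u v -> p4_ends v u.
  by move=> u v; apply/idP/idP; apply: p4_ends_rev.
case/existsP=> x /existsP[y /and4P[uniq_uxyv ux xy yv]].
apply/existsP; exists y; apply/existsP; exists x.
by rewrite /isP4 -rev_uniq uniq_uxyv [e v y]e_sym [e y x]e_sym [e x u]e_sym yv xy ux.
Qed.

Lemma card_neighbours_minus z w :
  e z w -> #|[set y | e z y] :\ w| <= maxdeg e - 1.
Proof.
by move=> ezw; have := deg_leq_maxdeg z; rewrite /deg (cardsD1 w) inE ezw; lia.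
Qed.

Lemma deg_p4_ends u : deg p4_ends u <= maxdeg e * (maxdeg e - 1) ^ 2.
Proof.
pose N z := [set y | e z y].
have ends_sub : [set v | p4_ends u v] \subset
    \bigcup_(x in N u) \bigcup_(y in N x :\ u) (N y :\ x).
  apply/subsetP => v; rewrite inE => /existsP[x /existsP[y /and4P[]]].
  rewrite /= !inE !negb_or => /and3P[/and3P[_ uy _] /andP[_ xv] _] ux xy yv.
  apply/bigcupP; exists x; rewrite ?inE //.
  by apply/bigcupP; exists y; rewrite !inE 1?eq_sym ?uy ?xv.
apply: leq_trans (subset_leq_card ends_sub) _.
apply: leq_trans (leq_card_bigcup _ _) _.
apply: leq_trans (leq_mul (deg_leq_maxdeg u) (leqnn _)).
rewrite /deg -sum_nat_const; apply: leq_sum => x; rewrite inE => ux.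
apply: leq_trans (leq_card_bigcup _ _) _.
have xu : e x u by rewrite e_sym.
rewrite expnS expn1; apply: leq_trans (leq_mul (card_neighbours_minus xu) (leqnn _)).
rewrite -sum_nat_const; apply: leq_sum => y; rewrite !inE => /andP[_ xy].
by apply: card_neighbours_minus; rewrite e_sym.
Qed.
End Conflicts.

Lemma chi_ei_leq_maxdeg (T : finType) (e : rel T) :
  symmetric e -> chi_ei e <= maxdeg e * (maxdeg e - 1) ^ 2 + 1.
Proof.
move=> e_sym; have [f f_ok] := greedy_coloring (p4_ends_sym e_sym)
  (@p4_ends_irr _ e) (deg_p4_ends e_sym).
by rewrite addn1; apply/chi_ei_min/ei_colorableP; exists f.
Qed.

Section Cycle.
Variables (n : nat) (n_gt0 : 0 < n).

Definition cyc (k : nat) : 'I_n := Ordinal (ltn_pmod k n_gt0).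

Lemma cycle_rel_sym : symmetric (cycle_rel n).
Proof. by move=> i j; rewrite /cycle_rel orbC. Qed.

Lemma cycle_rel_succ k : cycle_rel n (cyc k) (cyc k.+1).
Proof. by rewrite /cycle_rel /= -[(k %% n).+1]addn1 modnDml addn1 eqxx. Qed.

Lemma cyc_mod k : cyc (k %% n) = cyc k.
Proof. by apply: val_inj; rewrite /= modn_mod. Qed.

Lemma cyc_neq a b : a < b < a + n -> cyc a != cyc b.
Proof.
case/andP=> lt_ab lt_ban; rewrite -(subnKC (ltnW lt_ab)) -{1}[a]addn0.
apply/eqP => /(congr1 val) /= /eqP; rewrite eqn_modDl mod0n modn_small; lia.
Qed.

Lemma cycle_nbhs x : 2 < n ->
  [set y | cycle_rel n x y] = [set cyc x.+1; cyc (x + n.-1)].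
Proof.
move=> n_gt2; apply/setP => y; rewrite !inE /cycle_rel; congr orb.
rewrite -val_eqE /= -[X in X == _ = _](modn_small (ltn_ord x)).
rewrite -[X in _ = (X == _)](modn_small (ltn_ord y)) -[X in _ = X](eqn_modDr 1).
by rewrite -addnA !addn1 prednK // modnDr eq_sym.
Qed.

Lemma deg_cycle x : 2 < n -> deg (cycle_rel n) x = 2.
Proof. by move=> n_gt2; rewrite /deg cycle_nbhs // cards2 cyc_neq //; lia. Qed.

Lemma maxdeg_cycle : 2 < n -> maxdeg (cycle_rel n) = 2.
Proof.
move=> n_gt2; apply/eqP; rewrite eqn_leq; apply/andP; split.
  by apply/bigmax_leqP => x _; rewrite deg_cycle.
by rewrite -(deg_cycle (cyc 0)) //; apply: leq_bigmax.
Qed.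

Lemma cycle_isP4 k :
  3 < n -> isP4 (cycle_rel n) (cyc k) (cyc k.+1) (cyc k.+2) (cyc k.+3).
Proof.
by move=> n_gt3; rewrite /isP4 !cycle_rel_succ /= !inE !negb_or !cyc_neq //; lia.
Qed.

Lemma odd_cycle_not_ei_colorable k :
  3 < n -> odd n -> k <= 2 -> ~~ ei_colorable (cycle_rel n) k.
Proof.
move=> n_gt3 n_odd k_le2; apply/ei_colorableP => -[f f_ok].
pose g j := val (f (cyc (3 * j))).
have g_lt2 j : g j < 2 by apply: leq_trans (ltn_ord _) k_le2.
have g_step j : g j != g j.+1.
  rewrite /g (_ : 3 * j.+1 = (3 * j).+3); last by lia.
  exact/f_ok/isP4_ends/cycle_isP4.
have g_alt j : g j = if odd j then 1 - g 0 else g 0.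
  elim: j => [|j IHj] //=; move: (g_lt2 0) (g_lt2 j) (g_lt2 j.+1) (g_step j) IHj.
  by case: (odd j) => /=; lia.
have g_period : g n = g 0 by rewrite /g -cyc_mod modnMl muln0.
by move: (g_alt n) (g_lt2 0); rewrite n_odd g_period; lia.
Qed.

Lemma chi_ei_odd_cycle : 3 < n -> odd n -> chi_ei (cycle_rel n) = 3.
Proof.
move=> n_gt3 n_odd; apply/eqP; rewrite eqn_leq; apply/andP; split.
  by have := chi_ei_leq_maxdeg cycle_rel_sym; rewrite maxdeg_cycle // ltnW.
rewrite ltnNge; apply: contraL (chi_ei_colorable (cycle_rel n)).
exact: odd_cycle_not_ei_colorable.
Qed.
End Cycle.

Theorem proposition2p8 :
  (forall (T : finType) (e : rel T),
      symmetric e -> irreflexive e ->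
      chi_ei e <= maxdeg e * (maxdeg e - 1) ^ 2 + 1)
  /\
  (forall n : nat, 5 <= n -> odd n ->
      chi_ei (cycle_rel n) =
      maxdeg (cycle_rel n) * (maxdeg (cycle_rel n) - 1) ^ 2 + 1).
Proof.
(* A P4 has distinct vertices. *)
split=> [T e e_sym _|n n_ge5 n_odd]; first exact: chi_ei_leq_maxdeg.
have n_gt0 : 0 < n by apply: leq_trans n_ge5.
by rewrite (maxdeg_cycle n_gt0) ?(chi_ei_odd_cycle n_gt0) // (leq_trans _ n_ge5).
Qed.
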